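(* Let $k$ be an algebraically closed field of characteristic $0$, $R$ a finitely generated $k$-algebra which is an $n$-Cayley–Hamilton algebra with trace algebra $T=t(R)$, $P\in V(T)$ with maximal ideal $\mathfrak m_P$, and $R(P):=R/\mathfrak m_PR$ with the induced trace $t:R(P)\to k$. Then the Jacobson radical of $R(P)$ equals the kernel $\{a\in R(P):t(ab)=0\text{ for all }b\in R(P)\}$ of the bilinear trace form $(a,b)\mapsto t(ab)$. In particular $R(P)$ is semisimple if and only if this form is nondegenerate.
   Context: An algebra with trace over a commutative ring $A$ is an associative unital algebra $R$ with an $A$-linear $t:R\to R$ with $t(a)b=bt(a)$, $t(ab)=t(ba)$, $t(t(a)b)=t(a)t(b)$; it is $n$-Cayley–Hamilton if $t(1)=n$ and $\chi^n_a(a)=0$ for all $a$, where $\chi^n_a(x)=x^n+\sum_{i=1}^nP_i(t(a),\dots,t(a^i))x^{n-i}$ with $P_i$ the universal rational polynomials expressing elementary symmetric functions in terms of power sums. $V(T)$ denotes the maximal spectrum of $T$. *)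

From HB Require Import structures.
From mathcomp Require Import all_boot all_order all_algebra.
Set Implicit Arguments. Unset Strict Implicit. Unset Printing Implicit Defensive.
Import Order.TTheory GRing.Theory.
Local Open Scope ring_scope.

Section Defs.
Variables (k : fieldType) (R : algType k).

Definition is_trace (t : R -> R) : Prop :=
  [/\ forall (c : k) (a b : R), t (c *: a + b) = c *: t a + t b,
      forall a b : R, t a * b = b * t a,
      forall a b : R, t (a * b) = t (b * a) &
      forall a b : R, t (t a * b) = t a * t b].

(* Elementary symmetric functions e_0, ..., e_i expressed through the power
   sums p_1, p_2, ... by Newton's identities (char 0):
   e_0 = 1, e_i = (1/i) sum_{j=1}^i (-1)^(j-1) e_(i-j) p_j. *)
Fixpoint esym_seq (p : nat -> R) (i : nat) : seq R :=
  match i with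
  | 0 => [:: 1]
  | i'.+1 => let s := esym_seq p i' in
      rcons s (((i'.+1)%:R : k)^-1 *:
                 \sum_(j < i'.+1) (-1) ^+ j * s`_(i' - j) * p j.+1)
  end.

Definition esym_tr (t : R -> R) (a : R) (i : nat) : R :=
  (esym_seq (fun j => t (a ^+ j)) i)`_i.

(* chi^n_a(a) = a^n + sum_{i=1}^n P_i(t(a),...,t(a^i)) a^(n-i),
   with P_i = (-1)^i e_i written in the power sums. *)
Definition CH_eval (t : R -> R) (n : nat) (a : R) : R :=
  \sum_(i < n.+1) ((-1) ^+ i * esym_tr t a i) * a ^+ (n - i).

Definition cayley_hamilton (t : R -> R) (n : nat) : Prop :=
  is_trace t /\ t 1 = n%:R /\ forall a : R, CH_eval t n a = 0.

Definition fin_gen_alg : Prop :=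
  exists s : seq R, forall S : {pred R},
    subalg_closed S -> {subset s <= S} -> forall x : R, x \in S.

(* ideals of the trace algebra T = t(R), seen as subsets of R *)
Definition trace_ideal (t : R -> R) (I : R -> Prop) : Prop :=
  [/\ forall x, I x -> exists a, x = t a,
      I 0,
      forall x y, I x -> I y -> I (x + y) &
      forall a x, I x -> I (t a * x)].

(* maximal ideals of T, i.e. points of V(T) *)
Definition max_trace_ideal (t : R -> R) (m : R -> Prop) : Prop :=
  [/\ trace_ideal t m, ~ m 1 &
      forall I, trace_ideal t I -> (forall x, m x -> I x) ->
        ~ I 1 -> forall x, I x -> m x].

Definition ext_ideal (m : R -> Prop) (x : R) : Prop :=
  exists s : seq (R * R), (forall u, u \in s -> m u.1) /\
    x = \sum_(u <- s) u.1 * u.2.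
End Defs.

Section Ring.
Variable (A : nzRingType).
Definition left_ideal (L : A -> Prop) : Prop :=
  [/\ L 0, forall x y, L x -> L y -> L (x + y) &
      forall a x, L x -> L (a * x)].
Definition max_left_ideal (L : A -> Prop) : Prop :=
  [/\ left_ideal L, ~ L 1 &
      forall L', left_ideal L' -> (forall x, L x -> L' x) -> ~ L' 1 ->
        forall x, L' x -> L x].
Definition jacobson (x : A) : Prop :=
  forall L, max_left_ideal L -> L x.
Definition semisimple : Prop :=
  forall L, left_ideal L -> exists L', left_ideal L' /\
    (forall x, L x -> L' x -> x = 0) /\
    (forall x, exists y z, L y /\ L' z /\ x = y + z).
End Ring.

(* Modulo m_P R the trace becomes a k-valued form tP with tP (x y) = tP (y x)
   that still satisfies the Cayley-Hamilton identity; nothing else is used (in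
   particular neither finite generation, nor maximality of m, nor algebraic
   closedness of k).  Every y is then a root of its characteristic polynomial,
   and when t y is its only nonzero power trace, Newton's identities turn this
   into sum_i (-1)^i (t y)^i / i! y^(n-i) = 0.  Hence an element x of the kernel
   K of the trace form has x^n = 0, and in characteristic 0 nilpotent elements
   have trace 0.  As K and the Jacobson radical J are left ideals, K <= J since
   1 - a x is invertible for nilpotent a x, and J <= K since the algebraic
   elements y x of J are nilpotent.  A semisimple ring has no nonzero left ideal
   of nilpotents, so semisimplicity forces K = 0.  Conversely, if K = 0 every
   nonzero left ideal contains an idempotent, a family of orthogonal idempotents
   has at most n members (a weighted sum of them has that many distinct
   eigenvalues, all roots of its characteristic polynomial), and the sum e of
   a maximal such family in a left ideal L splits L off with complement
   {x | x e = 0}. *)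

From HB Require Import structures.
From mathcomp Require Import all_boot all_algebra.
From mathcomp Require Import ring zify boolp classical_sets.
Set Implicit Arguments.
Unset Strict Implicit.
Unset Printing Implicit Defensive.

Import GRing.Theory.
Local Open Scope ring_scope.

Section NewtonCoefficients.
Variable k : fieldType.

Lemma size_esym_seq (B : algType k) (p : nat -> B) i : size (esym_seq p i) = i.+1.
Proof. by elim: i => //= i IH; rewrite size_rcons IH. Qed.

Lemma eq_esym_seq (B : algType k) (p q : nat -> B) i :
  p =1 q -> esym_seq p i = esym_seq q i.
Proof.
move=> pq; elim: i => //= i ->; congr (rcons _ (_ *: _)).
by apply: eq_bigr => j _; rewrite pq.
Qed.

Lemma esym_seq_map (B C : algType k) (f : {lrmorphism B -> C}) p i l :
  f (esym_seq p i)`_l = (esym_seq (f \o p) i)`_l.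
Proof.
elim: i l => [|i IH] l /=; first by case: l => [|[|l]] /=; rewrite ?rmorph1 ?rmorph0.
rewrite !nth_rcons !size_esym_seq.
case: ltnP => // _; case: eqP => _; last by rewrite rmorph0.
rewrite linearZ /= rmorph_sum; congr (_ *: _); apply: eq_bigr => j _.
by rewrite !rmorphM rmorphXn rmorphN1 /= IH.
Qed.

Lemma esym_seq_alg (A : algType k) (q : nat -> k) i l :
  ((esym_seq (R := k^o) q i)`_l)%:A = (esym_seq (fun j => (q j)%:A : A) i)`_l.
Proof.
elim: i l => [|i IH] l /=; first by case: l => [|[|l]] /=; rewrite ?scale1r ?scale0r.
rewrite !nth_rcons !size_esym_seq.
case: ltnP => // _; case: eqP => _; last by rewrite scale0r.
rewrite -scalerA; congr (_ *: _).
rewrite -in_algE rmorph_sum; apply: eq_bigr => j _.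
by rewrite !rmorphM rmorphXn rmorphN1 /= IH.
Qed.

(* Newton's identities for the power sums (s, 0, 0, ...) give the Taylor
   coefficients of exp (s X). *)
Lemma esym_seq_exp (q : nat -> k) s :
  q 1%N = s -> (forall j, (2 <= j)%N -> q j = 0) ->
  forall i l, (l <= i)%N -> (esym_seq (R := k^o) q i)`_l = s ^+ l / l`!%:R.
Proof.
move=> q1 q_gt1; elim=> [|i IH] l.
  by rewrite leqn0 => /eqP -> /=; rewrite expr0 fact0 divr1.
rewrite leq_eqVlt => /orP[/eqP ->|]; last first.
  by rewrite ltnS => li /=; rewrite nth_rcons size_esym_seq ltnS li IH.
rewrite /= nth_rcons size_esym_seq ltnn eqxx big_ord_recl /= big1; last first.
  by move=> j _; rewrite q_gt1 ?mulr0.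
rewrite addr0 subn0 expr0 mul1r q1 IH // factS natrM invfM exprSr.
by rewrite /GRing.scale /=; ring.
Qed.

End NewtonCoefficients.

Section LeftIdeals.
Variable A : nzRingType.

Definition left_complement (L L' : A -> Prop) : Prop :=
  left_ideal L' /\ (forall x, L x -> L' x -> x = 0) /\
  (forall x, exists y z, L y /\ L' z /\ x = y + z).

Definition lprincipal (x z : A) : Prop := exists a, z = a * x.

Lemma left_ideal_lprincipal x : left_ideal (lprincipal x).
Proof.
split; first by exists 0; rewrite mul0r.
  by move=> y z [u ->] [v ->]; exists (u + v); rewrite mulrDl.
by move=> b z [u ->]; exists (b * u); rewrite mulrA.
Qed.

Lemma rinv_not_nilpotent (y w : A) N : y * w = 1 -> y ^+ N != 0.
Proof.
move=> yw; apply: contraNneq (oner_neq0 A) => yN.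
suff <- : y ^+ N * w ^+ N = 1 by rewrite yN mul0r.
elim: N {yN} => [|N IH]; first by rewrite !expr0 mulr1.
by rewrite exprSr exprS mulrA -(mulrA _ y) yw mulr1.
Qed.

Lemma geometric_sum_subr (z : A) m : (\sum_(i < m) z ^+ i) * (1 - z) = 1 - z ^+ m.
Proof.
have comm_z : GRing.comm (1 - z) (\sum_(i < m) z ^+ i).
  apply: commr_sum => i _; apply/commr_sym/commrB; first exact: commr1.
  exact/commr_sym/commrX/commr_refl.
by rewrite -comm_z -opprB mulNr -subrX1 opprB.
Qed.

Lemma left_ideal_nil_unit (L : A -> Prop) z N :
  left_ideal L -> L (1 - z) -> z ^+ N = 0 -> L 1.
Proof.
case=> _ _ LM L1z zN.
by rewrite -(subr0 1) -zN -geometric_sum_subr; apply: LM.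
Qed.

Lemma left_ideal_sub_max (I : A -> Prop) : left_ideal I -> ~ I 1 ->
  exists2 M, max_left_ideal M & forall x, I x -> M x.
Proof.
move=> [I0 ID IM] I1.
(* Zorn_bigcup also feeds the empty chain, whose union is the empty set. *)
pose P : set (set A) := fun S => (forall x, ~ S x) \/
   [/\ left_ideal S, ~ S 1 & forall x, I x -> S x].
have [S [PS Smax]] : exists S, P S /\ (forall B, (S `<` B)%classic -> ~ P B).
  apply: Zorn_bigcup => F FP Ftot.
  have Fid X y : F X -> X y -> [/\ left_ideal X, ~ X 1 & forall x, I x -> X x].
    by move=> FX Xy; case: (FP X FX) => // /(_ y).
  have [[S0 [FS0 [y0 S0y]]]|F0] := pselect (exists S, F S /\ exists y, S y); last first.
    by left=> x [X FX Xx]; apply: F0; exists X; split; last exists x.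
  have [_ _ IS0] := Fid S0 y0 FS0 S0y.
  right; split; last by move=> x Ix; exists S0 => //; apply: IS0.
  - split; [exists S0 => //; exact: IS0 | |].
    + move=> x y [X FX Xx] [Y FY Yy].
      have [[_ XD _] _ _] := Fid X x FX Xx; have [[_ YD _] _ _] := Fid Y y FY Yy.
      case: (Ftot X Y FX FY) => [XY|YX].
        by exists Y => //; apply: YD => //; apply: XY.
      by exists X => //; apply: XD => //; apply: YX.
    + move=> a x [X FX Xx]; have [[_ _ XM] _ _] := Fid X x FX Xx.
      by exists X => //; apply: XM.
  - by move=> [X FX X1]; have [_ /(_ X1)] := Fid X 1 FX X1.
case: PS => [S0|[SL S1 IS]].
  by exfalso; apply: (Smax I); [split=> [x /S0|/(_ 0 I0) /S0] | right].
exists S => //; split => // L' L'l SL' L'1 x L'x; apply: contrapT => Sx.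
apply: (Smax L'); first by split=> // /(_ x L'x).
by right; split=> // y /IS /SL'.
Qed.

Lemma jacobson_mull a (x : A) : jacobson x -> jacobson (a * x).
Proof. by move=> Jx L Lmax; have [[_ _ LM] _ _] := Lmax; apply: LM; exact: Jx. Qed.

Lemma jacobson_lunit (x : A) : jacobson x -> forall a, exists u, u * (1 - a * x) = 1.
Proof.
move=> Jx a; apply: contrapT => no_inv.
have [|M Mmax IM] := left_ideal_sub_max (left_ideal_lprincipal (1 - a * x)).
  by move=> [u /esym u_inv]; apply: no_inv; exists u.
have [[_ MD MM] M1 _] := Mmax.
apply: M1; rewrite -(subrK (a * x) 1); apply: MD.
  by apply: IM; exists 1; rewrite mul1r.
by apply: MM; apply: Jx.
Qed.

Lemma jacobson_of_lnil (x : A) : (forall a, exists N, (a * x) ^+ N = 0) -> jacobson x.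
Proof.
move=> ax_nil L [Lid L1 Lmax]; have [L0 LD LM] := Lid.
apply: contrapT => Lx.
pose L' z := exists l a, L l /\ z = l + a * x.
have L'l : left_ideal L'.
  split; first by exists 0, 0; rewrite mul0r addr0.
    move=> y z [l [a [Ll ->]]] [l' [a' [Ll' ->]]].
    by exists (l + l'), (a + a'); split; [apply: LD | rewrite mulrDl addrACA].
  move=> b z [l [a [Ll ->]]].
  by exists (b * l), (b * a); split; [apply: LM | rewrite mulrDr mulrA].
have [l [a [Ll one_eq]]] : L' 1.
  apply: contrapT => L'1; apply: Lx; apply: (Lmax L') => //.
    by move=> z Lz; exists z, 0; rewrite mul0r addr0.
  by exists 0, 1; rewrite mul1r add0r.
have [N axN] := ax_nil a.
by apply: L1; apply: (left_ideal_nil_unit Lid _ axN); rewrite one_eq addrK.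
Qed.

Lemma semisimple_lnil_eq0 (x : A) :
  semisimple A -> (forall a, exists N, (a * x) ^+ N = 0) -> x = 0.
Proof.
move=> ssA ax_nil.
have [L' [L'l [L_L' LL']]] := ssA _ (left_ideal_lprincipal x).
have [_ [z [[a ->] [L'z one_eq]]]] := LL' 1.
have [N axN] := ax_nil a.
have L'1 : L' 1 by apply: (left_ideal_nil_unit L'l _ axN); rewrite one_eq addrAC subrr add0r.
apply: L_L'; first by exists 1; rewrite mul1r.
by rewrite -[x]mulr1; case: L'l => _ _; apply.
Qed.

Definition orth_idempotents (es : seq A) : Prop :=
  (forall i, (i < size es)%N -> es`_i * es`_i = es`_i /\ es`_i != 0) /\
  (forall i j, (i < size es)%N -> (j < size es)%N -> i != j -> es`_i * es`_j = 0).

Lemma orth_idempotents_sum es (e := \sum_(i < size es) es`_i) :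
  orth_idempotents es ->
  [/\ forall i, (i < size es)%N -> es`_i * e = es`_i,
      forall i, (i < size es)%N -> e * es`_i = es`_i & e * e = e].
Proof.
move=> [es_id es_orth].
have ord_neq (i : nat) (j : 'I_(size es)) (hi : (i < size es)%N) :
    j != Ordinal hi -> (j : nat) != i.
  by apply: contra => /eqP ji; apply/eqP/val_inj.
have e_r i : (i < size es)%N -> es`_i * e = es`_i.
  move=> hi; rewrite mulr_sumr (bigD1 (Ordinal hi)) //= big1 ?addr0.
    by rewrite (es_id i hi).1.
  by move=> j /ord_neq nji; rewrite es_orth // eq_sym.
have e_l i : (i < size es)%N -> e * es`_i = es`_i.
  move=> hi; rewrite mulr_suml (bigD1 (Ordinal hi)) //= big1 ?addr0.
    by rewrite (es_id i hi).1.
  by move=> j /ord_neq nji; rewrite es_orth.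
split=> //; rewrite {1}/e mulr_suml; apply: eq_bigr => i _; exact: e_r.
Qed.

Lemma orth_idempotents_rcons es g :
  orth_idempotents es -> g * g = g -> g != 0 ->
  (forall i, (i < size es)%N -> es`_i * g = 0 /\ g * es`_i = 0) ->
  orth_idempotents (rcons es g).
Proof.
move=> [es_id es_orth] gg g0 g_orth; rewrite /orth_idempotents size_rcons.
have lt_rcons i : (i < (size es).+1)%N -> i = size es \/ (i < size es)%N.
  by rewrite ltnS leq_eqVlt => /orP[/eqP|]; [left | right].
split=> [i /lt_rcons [->|hi]|i j /lt_rcons [->|hi] /lt_rcons [->|hj]];
  rewrite !nth_rcons ?ltnn ?eqxx ?hi ?hj //.
- exact: es_id.
- by move=> _; apply: (g_orth j hj).2.
- by move=> _; apply: (g_orth i hi).1.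
- exact: es_orth.
Qed.

Lemma left_ideal_lann (L : A -> Prop) e :
  left_ideal L -> left_ideal (fun w => L w /\ w * e = 0).
Proof.
move=> [L0 LD LM]; split; first by split => //; rewrite mul0r.
  by move=> w w' [Lw we] [Lw' we']; split; [apply: LD | rewrite mulrDl we we' addr0].
by move=> b w [Lw we]; split; [apply: LM | rewrite -mulrA we mulr0].
Qed.

Lemma left_complement_idempotent (L : A -> Prop) e :
  left_ideal L -> L e -> e * e = e -> (forall y, L y -> y * e = 0 -> y = 0) ->
  left_complement L (fun x => x * e = 0).
Proof.
move=> [_ _ LM] Le ee Le_eq0; split; last split.
- split; first by rewrite mul0r.
    by move=> x y xe ye; rewrite mulrDl xe ye addr0.
  by move=> a x xe; rewrite -mulrA xe mulr0.
- exact: Le_eq0.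
- move=> x; exists (x * e), (x - x * e); split; first exact: LM.
  by rewrite mulrBl -mulrA ee subrr addrC subrK.
Qed.

End LeftIdeals.

Section AlgebraicElements.
Variables (k : fieldType) (A : algType k).

Lemma horner_alg_poly (y : A) m (E : nat -> k) :
  horner_alg y (\poly_(j < m) E j) = \sum_(j < m) E j *: y ^+ j.
Proof.
rewrite poly_def linear_sum; apply: eq_bigr => j _.
by rewrite linearZ /= rmorphXn /= horner_algX mulr_algl.
Qed.

Lemma horner_alg_eigen (x e : A) (c : k) p :
  x * e = c *: e -> horner_alg x p * e = p.[c] *: e.
Proof.
move=> xe; elim/poly_ind: p => [|p c' IH]; first by rewrite rmorph0 mul0r horner0 scale0r.
rewrite rmorphD rmorphM /= horner_algX horner_algC mulrDl -mulrA xe -scalerAr IH.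
by rewrite scalerA mulr_algl hornerMXaddC scalerDl mulrC.
Qed.

Lemma poly_split_X {p : {poly k}} :
  p != 0 -> exists r (g : {poly k}), g.[0] != 0 /\ p = g * 'X ^+ r.
Proof.
move=> p0; have [r [g g0 pE]] := multiplicity_XsubC p 0.
by exists r, g; rewrite p0 /= in g0; rewrite pE polyC0 subr0.
Qed.

Lemma jacobson_algebraic_nil (x : A) p :
  p != 0 -> horner_alg x p = 0 -> jacobson x -> exists N, x ^+ N = 0.
Proof.
move=> p0 px Jx; have [r [g [g0 pE]]] := poly_split_X p0; exists r.
set c := g.[0] in g0.
have [h gE] : exists h, g = h * 'X + c%:P.
  have /factor_theorem [h hE] : root (g - c%:P) 0 by rewrite /root !hornerE subrr.
  by exists h; rewrite polyC0 subr0 in hE; rewrite -hE subrK.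
have [u u_inv] := jacobson_lunit Jx (- c^-1 *: horner_alg x h).
have gx_inv : (c^-1 *: u) * horner_alg x g = 1.
  rewrite -u_inv gE rmorphD rmorphM /= horner_algX horner_algC -scalerAl scalerAr.
  congr (_ * _); rewrite scalerDr scalerA mulVf // scale1r scaleNr mulNr opprK.
  by rewrite -scalerAl addrC.
rewrite -[x ^+ r]mul1r -gx_inv -mulrA.
suff -> : horner_alg x g * x ^+ r = horner_alg x p by rewrite px mulr0.
by rewrite pE rmorphM rmorphXn /= horner_algX.
Qed.

(* The idempotent is v(a) a^r where u g + v X^r = 1 is a Bezout identity for
   X p = g X^r with g(0) != 0; the factor X makes r > 0, so it lies in L. *)
Lemma left_ideal_idempotent (L : A -> Prop) a p :
  left_ideal L -> L a -> p != 0 -> horner_alg a p = 0 -> (forall N, a ^+ N != 0) ->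
  exists f, [/\ L f, f * f = f & f != 0].
Proof.
move=> [_ _ LM] La p0 pa a_nnil.
pose q := 'X * p.
have q0 : q != 0 by rewrite mulf_neq0 ?polyX_eq0.
have qa : horner_alg a q = 0 by rewrite rmorphM /= pa mulr0.
have [r [g [g0 qE]]] := poly_split_X q0.
have r0 : (0 < r)%N.
  case: r qE => // qE; move: g0; rewrite -[g]mulr1 -(expr0 'X) -qE.
  by rewrite /q hornerM hornerX mul0r eqxx.
have cop : coprimep g ('X ^+ r).
  by apply: coprimep_expr; rewrite -(subr0 'X) -polyC0 coprimep_XsubC /root g0.
have [[u v] /= uv] := Bezout_eq1_coprimepP _ _ cop.
pose f := horner_alg a (v * 'X ^+ r).
have f_compl : horner_alg a (u * g) + f = 1 by rewrite /f -rmorphD uv rmorph1.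
have ann a' : horner_alg a (a' * q) = 0 by rewrite rmorphM /= qa mulr0.
exists f; split.
- have -> : f = horner_alg a (v * 'X ^+ r.-1) * a.
    by rewrite /f -{1}(prednK r0) exprSr mulrA rmorphM /= horner_algX.
  exact: LM.
- rewrite -{3}[f]mulr1 -f_compl mulrDr -[LHS]add0r; congr (_ + _).
  rewrite /f -rmorphM /=; apply/esym.
  have -> : v * 'X ^+ r * (u * g) = (u * v) * q by rewrite qE; ring.
  exact: ann.
- apply: contra (a_nnil r) => /eqP f0; apply/eqP.
  have ug1 : horner_alg a (u * g) = 1 by rewrite -f_compl f0 addr0.
  rewrite -[a ^+ r]mul1r -ug1 -(ann u) qE mulrA.
  by rewrite [in RHS]rmorphM rmorphXn /= horner_algX.
Qed.

Lemma orth_idempotents_size (es : seq A) p :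
  [pchar k] =i pred0 -> orth_idempotents es -> p != 0 ->
  horner_alg (\sum_(i < size es) i.+1%:R *: es`_i) p = 0 -> (size es < size p)%N.
Proof.
move=> /pcharf0P char0 [es_id es_orth] p0.
set x := \sum_(i < _) _ => px.
have x_eigen j : (j < size es)%N -> x * es`_j = j.+1%:R *: es`_j.
  move=> hj; rewrite mulr_suml (bigD1 (Ordinal hj)) //= big1 ?addr0.
    by rewrite -scalerAl (es_id j hj).1.
  by move=> i ij; rewrite -scalerAl es_orth ?scaler0.
pose rs := [seq i.+1%:R : k | i <- iota 0 (size es)].
have roots_p : all (root p) rs.
  apply/allP => c /mapP [j]; rewrite mem_iota add0n => /andP [_ hj] ->.
  have /esym/eqP := horner_alg_eigen p (x_eigen j hj).
  by rewrite px mul0r scaler_eq0 (negbTE (es_id j hj).2) orbF.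
have natf_inj : injective (fun i : nat => i%:R : k).
  move=> i j; wlog ij : i j / (j <= i)%N => [W|].
    by case: (leqP j i) => [|/ltnW] ?; [exact: W | move/esym/W=> ->].
  move/eqP; rewrite -subr_eq0 -natrB // char0 subn_eq0 => ji.
  by apply/eqP; rewrite eqn_leq ij ji.
have uniq_rs : uniq rs by rewrite map_inj_uniq ?iota_uniq // => i j /natf_inj [].
by have := max_poly_roots p0 roots_p uniq_rs; rewrite size_map size_iota.
Qed.

End AlgebraicElements.

Section TraceForm.
Variables (k : fieldType) (A : algType k) (n : nat) (tau : A -> k).
Hypothesis char0 : [pchar k] =i pred0.
Hypothesis tau0 : tau 0 = 0.
Hypothesis tauC : forall x y, tau (x * y) = tau (y * x).
Hypothesis tau_CH : forall y, CH_eval (fun z => (tau z)%:A) n y = 0.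

Definition tr_form_ker (x : A) : Prop := forall y, tau (x * y) = 0.

Definition char_poly (y : A) : {poly k} :=
  \poly_(j < n.+1) ((-1) ^+ (n - j) *
    (esym_seq (R := k^o) (fun i => tau (y ^+ i)) (n - j))`_(n - j)).

Lemma char_poly_root y : horner_alg y (char_poly y) = 0.
Proof.
rewrite horner_alg_poly -[RHS](tau_CH y) /CH_eval (reindex_inj rev_ord_inj) /=.
apply: eq_bigr => i _; rewrite subSS subKn; last by rewrite -ltnS.
rewrite /esym_tr -esym_seq_alg -[LHS]mulr_algl; congr (_ * _).
by rewrite -in_algE rmorphM rmorphXn rmorphN1.
Qed.

Lemma size_char_poly y : size (char_poly y) = n.+1.
Proof. by rewrite size_poly_eq //= subnn expr0 mul1r oner_neq0. Qed.

Lemma char_poly_neq0 y : char_poly y != 0.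
Proof. by rewrite -size_poly_eq0 size_char_poly. Qed.

Lemma CH_exp y s : tau y = s -> (forall j, (2 <= j)%N -> tau (y ^+ j) = 0) ->
  \sum_(i < n.+1) ((-1) ^+ i * (s ^+ i / i`!%:R)) *: y ^+ (n - i) = 0.
Proof.
move=> tau_y tau_gt1; rewrite -[RHS](tau_CH y) /CH_eval; apply: eq_bigr => i _.
rewrite -mulr_algl /esym_tr -esym_seq_alg (@esym_seq_exp _ _ s) ?expr1 //.
by rewrite -in_algE rmorphM rmorphXn rmorphN1.
Qed.

(* In CH_exp every term but the constant (-1)^n s^n / n! is a multiple of y,
   so s != 0 would make y right invertible. *)
Lemma tr_nil_higher y N :
  y ^+ N = 0 -> (forall j, (2 <= j)%N -> tau (y ^+ j) = 0) -> tau y = 0.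
Proof.
move=> yN tau_gt1; have := CH_exp erefl tau_gt1.
set s := tau y; rewrite big_ord_recr /= subnn expr0.
set c := _ * _; set Q := \sum_(i < n) _ => CH0.
pose w := \sum_(i < n) ((-1) ^+ i * (s ^+ i / i`!%:R)) *: y ^+ (n - i).-1.
have yw : y * w = Q.
  rewrite mulr_sumr; apply: eq_bigr => i _.
  by rewrite -scalerAr -exprS prednK // subn_gt0.
apply/eqP; apply: contraT => s0.
have c0 : c != 0.
  rewrite mulf_neq0 ?signr_eq0 // mulf_neq0 ?expf_neq0 ?invr_eq0 //.
  by have /pcharf0P -> := char0; rewrite -lt0n fact_gt0.
have Q_eq : Q = - (c *: 1) by apply/eqP; rewrite -addr_eq0 CH0.
have := rinv_not_nilpotent N (y := y) (w := - c^-1 *: w); rewrite yN eqxx; apply.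
by rewrite scaleNr mulrN -scalerAr yw Q_eq scalerN opprK scalerA mulVf // scale1r.
Qed.

Lemma tr_nil y N : y ^+ N = 0 -> tau y = 0.
Proof.
move=> yN.
(* Downward induction on j, applying tr_nil_higher to y ^+ j. *)
suff tr_pow d j : (N <= j + d)%N -> (0 < j)%N -> tau (y ^+ j) = 0.
  by rewrite -[y]expr1 (tr_pow N).
elim: d j => [|d IH] j Nj j0.
  by rewrite addn0 in Nj; rewrite -(subnK Nj) exprD yN mulr0 tau0.
apply: (tr_nil_higher (N := N)).
  by rewrite -exprM mulnC exprM yN expr0n; case: j j0 {Nj}.
by move=> i i2; rewrite -exprM; apply: IH; nia.
Qed.

Lemma tr_form_ker_nil x : tr_form_ker x -> x ^+ n = 0.
Proof.
move=> x_ker.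
have tau_x : tau x = 0 by rewrite -[x]mulr1 x_ker.
have tau_pow j : (2 <= j)%N -> tau (x ^+ j) = 0 by case: j => // j _; rewrite exprS x_ker.
have := CH_exp tau_x tau_pow; rewrite big_ord_recl big1 ?addr0.
  by rewrite expr0 mul1r fact0 divr1 scale1r subn0.
by move=> i _; rewrite expr0n /= mul0r mulr0 scale0r.
Qed.

Lemma tr_form_ker_mull a x : tr_form_ker x -> tr_form_ker (a * x).
Proof. by move=> x_ker y; rewrite -mulrA tauC -mulrA x_ker. Qed.

Lemma jacobson_tr_form_ker x : jacobson x <-> tr_form_ker x.
Proof.
split=> [Jx y|x_ker]; last first.
  by apply: jacobson_of_lnil => a; exists n; apply/tr_form_ker_nil/tr_form_ker_mull.
have [N yxN] :=
  jacobson_algebraic_nil (char_poly_neq0 _) (char_poly_root _) (jacobson_mull y Jx).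
by rewrite tauC (tr_nil yxN).
Qed.

Lemma orth_idempotents_size_le (es : seq A) : orth_idempotents es -> (size es <= n)%N.
Proof.
move=> es_orth; rewrite -ltnS -(size_char_poly (\sum_(i < size es) i.+1%:R *: es`_i)).
exact: orth_idempotents_size char0 es_orth (char_poly_neq0 _) (char_poly_root _).
Qed.

Section Nondegenerate.
Hypothesis nondeg : forall x, tr_form_ker x -> x = 0.

(* A nonzero y in L killed by e gives a non-nilpotent z y there; its idempotent f
   is then corrected to f - e f, orthogonal to every member of es. *)
Lemma orth_idempotents_extend (L : A -> Prop) (es : seq A) :
  left_ideal L -> {in es, forall e, L e} -> orth_idempotents es ->
  (exists L', left_complement L L') \/ exists2 g, L g & orth_idempotents (rcons es g).
Proof.
move=> Lid es_L es_orth; have [L0 LD LM] := Lid.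
have [es_r es_l ee] := orth_idempotents_sum es_orth.
set e := \sum_(i < size es) es`_i in es_r es_l ee.
have Le : L e by apply: big_ind => // i _; apply/es_L/mem_nth.
have [[y [Ly ye y0]]|no_y] := pselect (exists y, [/\ L y, y * e = 0 & y != 0]).
  right.
  have /existsNP [z yz] : ~ tr_form_ker y by move/nondeg/eqP; exact/negP.
  have zy_nnil M : (z * y) ^+ M != 0.
    by apply/eqP => /tr_nil zy0; apply: yz; rewrite tauC zy0.
  have [|f [[Lf fe] ff f0]] := left_ideal_idempotent (left_ideal_lann e Lid)
    _ (char_poly_neq0 _) (char_poly_root _) zy_nnil.
    by split; [apply: LM | rewrite -mulrA ye mulr0].
  have fes i : (i < size es)%N -> f * es`_i = 0 by move=> hi; rewrite -es_l // mulrA fe mul0r.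
  exists (f - e * f); first by apply: LD => //; rewrite -mulNr; apply: LM.
  apply: orth_idempotents_rcons => //.
  - by rewrite mulrBl !mulrBr ff -!mulrA (mulrA f) fe !mul0r mulr0 ff !subr0.
  - apply: contra f0 => /eqP /subr0_eq f_eq.
    by rewrite -ff {2}f_eq mulrA fe mul0r.
  - move=> i hi; rewrite mulrBr mulrA es_r // subrr; split=> //.
    by rewrite mulrBl fes // -mulrA fes // mulr0 subrr.
left; exists (fun x => x * e = 0); apply: left_complement_idempotent => // x Lx xe.
by apply/eqP; apply: contrapT => /negP x0; apply: no_y; exists x.
Qed.

Lemma tr_form_nondeg_semisimple : semisimple A.
Proof.
move=> L Lid.
suff ext d es : (n - size es <= d)%N -> {in es, forall e, L e} -> orth_idempotents es ->
    exists L', left_complement L L'.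
  by apply: (ext n [::]); rewrite ?subn0 //; split.
elim: d es => [|d IH] es size_es es_L es_orth;
  case: (orth_idempotents_extend Lid es_L es_orth) => // [[g Lg es_orth']].
  have := orth_idempotents_size_le es_orth'; rewrite size_rcons => size_es'.
  by move: size_es; rewrite leqn0 subn_eq0 leqNgt size_es'.
apply: (IH _ _ _ es_orth'); first by rewrite size_rcons; lia.
by move=> x; rewrite mem_rcons inE => /orP[/eqP ->|/es_L].
Qed.

End Nondegenerate.

Lemma semisimple_tr_form_nondeg : semisimple A <-> (forall x, tr_form_ker x -> x = 0).
Proof.
split=> [ssA x x_ker|]; last exact: tr_form_nondeg_semisimple.
apply: semisimple_lnil_eq0 ssA _ => a; exists n.
exact/tr_form_ker_nil/tr_form_ker_mull.
Qed.

End TraceForm.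

Section QuotientTrace.
Variables (k : fieldType) (R RP : algType k) (pi : {lrmorphism R -> RP}).
Variables (t : R -> R) (tP : RP -> k).
Hypothesis pi_surj : forall y, exists x, pi x = y.
Hypothesis pi_t : forall a, pi (t a) = (tP (pi a))%:A.

Let scalar_inj : injective (fun c : k => c%:A : RP).
Proof. by move=> c d; rewrite -!in_algE; apply: fmorph_inj. Qed.

Lemma quotient_tr0 : t 0 = 0 -> tP 0 = 0.
Proof. by move=> t0; apply: scalar_inj; rewrite /= -(rmorph0 pi) -pi_t t0 rmorph0 scale0r. Qed.

Lemma quotient_trC :
  (forall a b, t (a * b) = t (b * a)) -> forall x y, tP (x * y) = tP (y * x).
Proof.
move=> tC x y; have [a <-] := pi_surj x; have [b <-] := pi_surj y.
by apply: scalar_inj; rewrite /= -!rmorphM -!pi_t tC.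
Qed.

Lemma quotient_tr_CH n :
  (forall a, CH_eval t n a = 0) -> forall y, CH_eval (fun z => (tP z)%:A) n y = 0.
Proof.
move=> tCH y; have [a <-] := pi_surj y.
rewrite -(rmorph0 pi) -(tCH a) /CH_eval rmorph_sum; apply: eq_bigr => i _.
rewrite !rmorphM rmorphXn rmorphN1 rmorphXn /= /esym_tr esym_seq_map.
by congr (_ * _`_ _ * _); apply: eq_esym_seq => j /=; rewrite pi_t rmorphXn.
Qed.

End QuotientTrace.

Lemma tr_mod_ext_ideal (k : fieldType) (R RP : algType k) (pi : {lrmorphism R -> RP})
    (t : R -> R) (tP : RP -> k) (m : R -> Prop) :
  (forall x, ext_ideal m x -> pi x = 0) -> (forall a, m (t a - (tP (pi a))%:A)) ->
  forall a, pi (t a) = (tP (pi a))%:A.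
Proof.
move=> pi_m tm a; apply/eqP; rewrite -subr_eq0 -(rmorph_alg pi) -rmorphB; apply/eqP/pi_m.
exists [:: (t a - (tP (pi a))%:A, 1)]; rewrite big_seq1.
split=> [u|]; last by rewrite /= mulr1.
by rewrite inE => /eqP ->; exact: tm.
Qed.

Theorem proposition5p7
  (k : closedFieldType) (hk : [pchar k] =i pred0)
  (R : algType k) (n : nat) (t : R -> R)
  (hfg : fin_gen_alg R) (hCH : cayley_hamilton t n)
  (m : R -> Prop) (hm : max_trace_ideal t m)
  (RP : algType k) (pi : {lrmorphism R -> RP})
  (pi_surj : forall y : RP, exists x : R, pi x = y)
  (pi_ker : forall x : R, pi x = 0 <-> ext_ideal m x)
  (tP : RP -> k) (htP : forall a : R, m (t a - (tP (pi a))%:A)) :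
  (forall x : RP, jacobson x <-> (forall y : RP, tP (x * y) = 0)) /\
  (semisimple RP <-> (forall x : RP, (forall y : RP, tP (x * y) = 0) -> x = 0)).
Proof.
have [[tL _ tC _] [_ tCH]] := hCH.
have pi_t := tr_mod_ext_ideal (fun x => (pi_ker x).2) htP.
have t0 : t 0 = 0.
  have := tL 1 0 0; rewrite scaler0 addr0 scale1r => t00.
  by apply: (addrI (t 0)); rewrite addr0 -t00.
have tP0 := quotient_tr0 pi_t t0.
have tPC := quotient_trC pi_surj pi_t tC.
have tP_CH := quotient_tr_CH pi_surj pi_t tCH.
split=> [x|]; first exact: jacobson_tr_form_ker tP0 tPC tP_CH x.
exact: semisimple_tr_form_nondeg hk tP0 tPC tP_CH.
Qed.
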